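(* Let $\mathcal F$ be a family of configurations and $\mathcal P$ a boolean predicate over $\mathcal F$. Suppose there is a configuration $G_s\in\mathcal F$ such that (1) $\mathcal P(G_s)=\text{true}$; (2) $G_s$ contains $r$ directed edges $e_1,\dots,e_r$ whose $t$-neighborhoods $N_t(e_1,G_s),\dots,N_t(e_r,G_s)$ are pairwise disjoint and contain $q$ vertices each, and there exist $r$ state-preserving isomorphisms $\sigma_i:V(N_t(e_1,G_s))\to V(N_t(e_i,G_s))$, $i=1,\dots,r$, with $\sigma_i(H(e_1))=H(e_i)$ and $\sigma_i(T(e_1))=T(e_i)$; and (3) for every $i\ne j$ there is a connected component $H_s$ of $\mathrm{Cross}(e_i,e_j,G_s)$ with $\mathcal P(H_s)=\text{false}$. Then the label size of any $t$-PLS for $(\mathcal F,\mathcal P)$ is $\Omega((\log r)/q)$.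
   Context: A configuration $G_s$ consists of a graph $G=(V,E)$ together with a state assignment $\varphi:V\to S$ (states may include unique vertex identifiers). A $t$-round proof-labeling scheme ($t$-PLS) for $(\mathcal F,\mathcal P)$ consists of a prover assigning a bit string (label) to every vertex of each configuration, and a deterministic distributed verifier running $t$ synchronous rounds (in each round every vertex receives messages from all neighbors, computes, and sends messages to neighbors), after which each vertex outputs true or false; the scheme must be complete (configurations satisfying $\mathcal P$ are accepted, i.e. all vertices output true, with the prover's labels) and sound (configurations not satisfying $\mathcal P$ are rejected, i.e. some vertex outputs false, under every labeling). The label size is the maximum length of a label assigned by the prover on configurations satisfying $\mathcal P$. For a directed edge $e$, $H(e)$ is its head and $T(e)$ its tail. $\mathrm{Cross}(e_1,e_2,G)$ is the graph obtained from $G$ by replacing $e_1,e_2$ with $(T(e_1),H(e_2))$ and $(T(e_2),H(e_1))$. For an edge $e=(u,v)$, $N_k(e,G)$ is the subgraph induced on the vertices $w$ with $\min(\mathrm{dist}(w,u),\mathrm{dist}(w,v))\le k$. *)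

From mathcomp Require Import all_boot.
Set Implicit Arguments. Unset Strict Implicit. Unset Printing Implicit Defensive.

Record config (S : Type) := Config {
  vtx : finType;
  adj : rel vtx;
  st  : vtx -> S }.

Section Defs.
Variable S : Type.

Definition simple_graph (G : config S) :=
  symmetric (@adj S G) /\ irreflexive (@adj S G).

Fixpoint within (T : finType) (a : rel T) (k : nat) (x y : T) : bool :=
  match k with
  | 0 => x == y
  | k'.+1 => within a k' x y || [exists z, a x z && within a k' z y]
  end.

Definition Tl (T : Type) (e : T * T) := e.1.
Definition Hd (T : Type) (e : T * T) := e.2.

Definition nbhd (G : config S) (k : nat) (e : vtx G * vtx G) : {set vtx G} :=
  [set w | within (@adj S G) k w (Tl e) || within (@adj S G) k w (Hd e)].

Definition state_iso (G : config S) (A B : {set vtx G}) (f : vtx G -> vtx G) :=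
  [/\ {in A, forall x, f x \in B},
      {in A &, injective f},
      (forall y, y \in B -> exists2 x, x \in A & f x = y),
      {in A &, forall x y, adj (f x) (f y) = adj x y} &
      {in A, forall x, st (f x) = st x}].

Definition same_edge (T : eqType) (e : T * T) (x y : T) :=
  ((x == Tl e) && (y == Hd e)) || ((x == Hd e) && (y == Tl e)).

(* Cross(e1,e2,G): replace e1, e2 by (T e1, H e2) and (T e2, H e1) *)
Definition cross_adj (T : eqType) (a : rel T) (e1 e2 : T * T) : rel T :=
  fun x y =>
    [|| a x y && ~~ same_edge e1 x y && ~~ same_edge e2 x y,
        same_edge (Tl e1, Hd e2) x y
      | same_edge (Tl e2, Hd e1) x y].

Definition cross (G : config S) (e1 e2 : vtx G * vtx G) : config S :=
  @Config S (vtx G) (cross_adj (@adj S G) e1 e2) (@st S G).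

Definition induced (G : config S) (A : {set vtx G}) : config S :=
  @Config S {x : vtx G | x \in A}
    (fun a b => adj (val a) (val b)) (fun a => st (val a)).

Definition component (G : config S) (x : vtx G) : config S :=
  induced [set y | connect (@adj S G) x y].

(* A deterministic synchronous verifier (full-information, w.l.o.g. each
   vertex sends its whole memory to all neighbours; a vertex receives the
   multiset of its neighbours' messages, as a sequence on which the step
   function must not depend on the order). *)
Record verifier := Verifier {
  vmem : eqType;
  vinit : S -> bitseq -> vmem;
  vstep : vmem -> seq vmem -> vmem;
  vout : vmem -> bool;
  vstep_perm : forall m s1 s2, perm_eq s1 s2 -> vstep m s1 = vstep m s2 }.

Fixpoint run (ver : verifier) (G : config S) (L : vtx G -> bitseq)
    (k : nat) : vtx G -> vmem ver :=
  match k with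
  | 0 => fun x => vinit ver (st x) (L x)
  | k'.+1 => fun x =>
      vstep (run ver L k' x) [seq run ver L k' y | y <- enum (@adj S G x)]
  end.

Definition accepts (ver : verifier) (t : nat) (G : config S)
    (L : vtx G -> bitseq) := forall x, vout (run ver L t x).

Definition prover := forall G : config S, vtx G -> bitseq.

Definition is_PLS (F : config S -> Prop) (P : config S -> bool) (t : nat)
    (prv : prover) (ver : verifier) :=
  (forall G, F G -> P G -> accepts ver t (prv G)) /\
  (forall G, F G -> P G = false -> forall L : vtx G -> bitseq, ~ accepts ver t L).

Definition label_size_le (F : config S -> Prop) (P : config S -> bool)
    (prv : prover) (l : nat) :=
  forall G, F G -> P G -> forall x, size (prv G x) <= l.

End Defs.

From mathcomp Require Import all_boot.
From mathcomp Require Import zify.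
Set Implicit Arguments. Unset Strict Implicit. Unset Printing Implicit Defensive.

(* Pull the prover's labels on each copy N_t(e_i) back to N_t(e_1) along sigma_i:
   this gives a word of q labels of at most l bits, i.e. one of at most 2^(2lq)
   patterns.  If copies i <> j carried the same pattern, then in Cross(e_i, e_j, G_s)
   every vertex would see in t rounds exactly what it sees in G_s: away from the
   four endpoints nothing changes, and an endpoint trades its partner for the
   corresponding endpoint of the other copy, whose t-round view is the same by
   the isomorphisms.  The verifier would then accept the crossed component on
   which P is false, contradicting soundness; hence r <= 2^(2lq). *)

Section Within.
Variables (T : finType) (a : rel T).

Lemma within_refl k x : within a k x x.
Proof. by elim: k => [|k IH] /=; rewrite ?eqxx ?IH. Qed.

Lemma withinS k x y : within a k x y -> within a k.+1 x y.
Proof. by move=> /= ->. Qed.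

Lemma within_mono k m x y : k <= m -> within a k x y -> within a m x y.
Proof. by move=> /subnK <-; elim: (m - k) => // d IH /IH; apply: withinS. Qed.

Lemma within_cons k x z y : a x z -> within a k z y -> within a k.+1 x y.
Proof. by move=> xz zy /=; apply/orP; right; apply/existsP; exists z; rewrite xz. Qed.

Lemma within_rcons k x z y : within a k x z -> a z y -> within a k.+1 x y.
Proof.
elim: k x => [|k IH] x; first by move=> /eqP -> zy; apply: within_cons zy (within_refl _ _).
case/orP=> [xz zy | /existsP[w /andP[xw wz]] zy].
  by apply: withinS; apply: IH xz zy.
by apply: within_cons xw (IH _ wz zy).
Qed.

Lemma within_sym k : symmetric a -> symmetric (within a k).
Proof.
move=> asym; suff sub x y : within a k x y -> within a k y x.
  by move=> x y; apply/idP/idP; apply: sub.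
elim: k x y => [|k IH] x y /=; first by rewrite eq_sym.
case/orP=> [/IH /withinS // | /existsP[w /andP[xw /IH wy]]].
by apply: within_rcons wy _; rewrite asym.
Qed.

Lemma within_subS k x (A : {pred T}) :
  {subset within a k.+1 x <= A} -> {subset within a k x <= A}.
Proof. by move=> sub y /withinS; apply: sub. Qed.

Lemma within_sub_cons k x z (A : {pred T}) :
  a x z -> {subset within a k.+1 x <= A} -> {subset within a k z <= A}.
Proof. by move=> xz sub y /(within_cons xz); apply: sub. Qed.

Lemma within_sub_adj k x (A : {pred T}) :
  {subset within a k.+1 x <= A} -> {subset a x <= A}.
Proof. by move=> sub z xz; apply: (within_sub_cons xz sub); apply: within_refl. Qed.

End Within.

Section Neighbourhoods.
Variables (S : Type) (G : config S).
Hypothesis adj_sym : symmetric (@adj S G).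

Lemma within_Tl_nbhd t k (e : vtx G * vtx G) :
  k <= t -> {subset within (@adj S G) k (Tl e) <= nbhd t e}.
Proof.
move=> kt y ey; rewrite inE (within_mono kt) //.
by rewrite within_sym.
Qed.

Lemma within_Hd_nbhd t k (e : vtx G * vtx G) :
  k <= t -> {subset within (@adj S G) k (Hd e) <= nbhd t e}.
Proof.
move=> kt y ey; rewrite inE orbC (within_mono kt) //.
by rewrite within_sym.
Qed.

Lemma mem_nbhd_Tl t (e : vtx G * vtx G) : Tl e \in nbhd t e.
Proof. by rewrite inE within_refl. Qed.

Lemma mem_nbhd_Hd t (e : vtx G * vtx G) : Hd e \in nbhd t e.
Proof. by rewrite inE within_refl orbT. Qed.

Lemma disjoint_nbhd_separated t (ti hi tj hj : vtx G) :
  irreflexive (@adj S G) -> adj ti hi -> adj tj hj ->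
  [disjoint nbhd t.+1 (ti, hi) & nbhd t.+1 (tj, hj)] ->
  [/\ uniq [:: ti; hi; tj; hj], ~~ adj ti hj & ~~ adj tj hi].
Proof.
move=> airr ai aj disj.
have apart u v : u \in nbhd t.+1 (ti, hi) -> v \in nbhd t.+1 (tj, hj) -> u != v.
  by move=> uI vJ; apply: contraTneq vJ => <-; rewrite (disjointFr disj uI).
have adj_neq (u v : vtx G) : adj u v -> u != v.
  by move=> uv; apply: contraTneq uv => ->; apply/negPf; apply: airr.
have adj_nbhd (e : vtx G * vtx G) y : adj (Tl e) y -> y \in nbhd t.+1 e.
  move=> ey; have ey1 := within_cons ey (within_refl _ 0 y).
  exact: (within_Tl_nbhd (t := t.+1) (k := 1) isT ey1).
have tiI : ti \in nbhd t.+1 (ti, hi) := mem_nbhd_Tl _ _.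
have hiI : hi \in nbhd t.+1 (ti, hi) := mem_nbhd_Hd _ _.
have tjJ : tj \in nbhd t.+1 (tj, hj) := mem_nbhd_Tl _ _.
have hjJ : hj \in nbhd t.+1 (tj, hj) := mem_nbhd_Hd _ _.
split.
- by rewrite /= !inE !negb_or !andbT (adj_neq _ _ ai) (adj_neq _ _ aj) !apart.
- by apply/negP => /(adj_nbhd (ti, hi)) /apart /(_ hjJ); rewrite eqxx.
- by apply/negP => /(adj_nbhd (tj, hj)) /(apart _ _ hiI); rewrite eqxx.
Qed.

End Neighbourhoods.

(* Bijective base-2 numeration. *)
Fixpoint bitseq_code (s : bitseq) : nat :=
  if s is b :: s' then 2 * bitseq_code s' + b + 1 else 0.

Lemma bitseq_code_inj : injective bitseq_code.
Proof.
elim=> [|b1 s1 IH] [|b2 s2] //=; try lia.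
move=> h; have eb : b1 = b2 by case: b1 b2 h => [] [] /=; lia.
by subst; congr (_ :: _); apply: IH; lia.
Qed.

Lemma bitseq_code_bound s : bitseq_code s + 2 <= 2 ^ (size s).+1.
Proof. by elim: s => [|b s IH] //=; rewrite expnS; case: b; lia. Qed.

Lemma bitseq_code_lt l s : size s <= l -> bitseq_code s < 2 ^ (2 * l).
Proof.
case: l => [|l] sl; first by move: sl; rewrite leqn0 => /nilP ->.
have : 2 ^ (size s).+1 <= 2 ^ (2 * l.+1) by rewrite leq_exp2l //; lia.
by have := bitseq_code_bound s; lia.
Qed.

Lemma card_distinct_labelings (T : finType) (A : {pred T}) n l
    (lab : 'I_n -> T -> bitseq) :
  (forall i x, size (lab i x) <= l) ->
  (forall i j, {in A, lab i =1 lab j} -> i = j) ->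
  n <= 2 ^ (2 * l * #|A|).
Proof.
move=> lab_size lab_inj.
pose pattern i : {ffun {x | x \in A} -> 'I_(2 ^ (2 * l))} :=
  [ffun x => Ordinal (bitseq_code_lt (lab_size i (val x)))].
have pattern_inj : injective pattern.
  move=> i j /ffunP eq_ij; apply: lab_inj => x xA; apply: bitseq_code_inj.
  by have := eq_ij (exist _ x xA); rewrite !ffunE => -[].
have := leq_card _ pattern_inj.
by rewrite card_ffun card_sig !card_ord -expnM (eq_card (B := A)).
Qed.

Section Crossing.
Variables (T : finType) (a : rel T).

Lemma same_edge_rev (x y u v : T) : same_edge (y, x) u v = same_edge (x, y) u v.
Proof. exact: orbC. Qed.

Lemma cross_adjC e1 e2 : cross_adj a e1 e2 =2 cross_adj a e2 e1.
Proof. by move=> u v; rewrite /cross_adj andbAC; congr (_ || _); apply: orbC. Qed.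

Lemma cross_adj_rev ti hi tj hj :
  cross_adj a (ti, hi) (tj, hj) =2 cross_adj a (hi, ti) (hj, tj).
Proof.
move=> u v; rewrite /cross_adj /Tl /Hd /= !(same_edge_rev ti) !(same_edge_rev tj).
by congr (_ || _); apply: orbC.
Qed.

Lemma cross_adj_tail ti hi tj hj y :
  ti != hi -> ti != tj -> ti != hj ->
  cross_adj a (ti, hi) (tj, hj) ti y = a ti y && (y != hi) || (y == hj).
Proof.
move=> /negbTE tihi /negbTE titj /negbTE tihj.
by rewrite /cross_adj /same_edge /Tl /Hd /= eqxx tihi titj tihj /= !orbF andbT.
Qed.

Lemma cross_adj_other ti hi tj hj x :
  x \notin [:: ti; hi; tj; hj] -> cross_adj a (ti, hi) (tj, hj) x =1 a x.
Proof.
rewrite !inE !negb_or => /and4P[/negbTE xti /negbTE xhi /negbTE xtj /negbTE xhj] y.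
by rewrite /cross_adj /same_edge /Tl /Hd /= xti xhi xtj xhj /= !andbT orbF.
Qed.

Lemma perm_map_enum_swap (R : eqType) (f : T -> R) (P Q : pred T) x0 y0 :
  (forall y, P y = Q y && (y != x0) || (y == y0)) -> Q x0 -> ~~ Q y0 ->
  f x0 = f y0 -> perm_eq [seq f y | y <- enum P] [seq f y | y <- enum Q].
Proof.
move=> defP Qx0 Qy0 fx0y0.
have Qu := enum_uniq Q.
have P_rem : perm_eq (enum P) (y0 :: rem x0 (enum Q)).
  apply: uniq_perm; first exact: enum_uniq.
    rewrite /= rem_uniq // andbT (mem_rem_uniq _ Qu) inE mem_enum.
    by apply/negP => /andP[_ /(negP Qy0)].
  move=> y; rewrite mem_enum inE (mem_rem_uniq _ Qu) inE mem_enum.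
  by rewrite -[y \in P]/(P y) -[y \in Q]/(Q y) defP orbC andbC.
apply: (perm_trans (perm_map f P_rem)).
rewrite /= -fx0y0 perm_sym.
by apply: (perm_map f (@perm_to_rem _ x0 (enum Q) _)); rewrite mem_enum.
Qed.

Lemma cross_adj_perm (R : eqType) (f : T -> R) ti hi tj hj x :
  symmetric a -> uniq [:: ti; hi; tj; hj] ->
  a ti hi -> a tj hj -> ~~ a ti hj -> ~~ a tj hi ->
  f hi = f hj -> f ti = f tj ->
  perm_eq [seq f y | y <- enum (cross_adj a (ti, hi) (tj, hj) x)]
          [seq f y | y <- enum (a x)].
Proof.
have tail u v u' v' : u != v -> u != u' -> u != v' -> a u v -> ~~ a u v' -> f v = f v' ->
    perm_eq [seq f y | y <- enum (cross_adj a (u, v) (u', v') u)] [seq f y | y <- enum (a u)].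
  by move=> uv uu' uv' auv auv'; apply: perm_map_enum_swap => // y; apply: cross_adj_tail.
move=> asym; rewrite /= !inE !negb_or !andbT.
move=> /and3P[/and3P[tihi titj tihj] /andP[hitj hihj] tjhj] atihi atjhj ntihj ntjhi fh ft.
have [->|xti] := eqVneq x ti; first exact: tail.
have [->|xhi] := eqVneq x hi.
  rewrite (eq_enum (cross_adj_rev ti hi tj hj hi)).
  by apply: tail; rewrite // 1?eq_sym // asym.
have [->|xtj] := eqVneq x tj.
  rewrite (eq_enum (cross_adjC (ti, hi) (tj, hj) tj)).
  by apply: tail; rewrite // 1?eq_sym.
have [->|xhj] := eqVneq x hj.
  rewrite (eq_enum (cross_adjC (ti, hi) (tj, hj) hj)) (eq_enum (cross_adj_rev tj hj ti hi hj)).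
  by apply: tail; rewrite // 1?eq_sym // asym.
have xother : x \notin [:: ti; hi; tj; hj] by rewrite !inE !negb_or xti xhi xtj xhj.
by rewrite (eq_enum (cross_adj_other xother)).
Qed.

End Crossing.

Section Runs.
Variables (S : Type) (ver : verifier S).

Lemma run_rewire (G : config S) (a : rel (vtx G)) (L : vtx G -> bitseq) k :
  (forall m x, m < k ->
     perm_eq [seq run ver L m y | y <- enum (a x)] [seq run ver L m y | y <- enum (adj x)]) ->
  forall x, run ver (G := @Config S (vtx G) a (@st S G)) L k x = run ver L k x.
Proof.
elim: k => [|k IH] a_perm x //=.
have IHk := IH (fun m y mk => a_perm m y (ltnW mk)).
by rewrite (eq_map IHk) IHk; apply: vstep_perm; apply: a_perm.
Qed.

Lemma run_induced (G : config S) (A : {set vtx G}) (L : vtx G -> bitseq) :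
  (forall x y, x \in A -> adj x y -> y \in A) ->
  forall k (x : vtx (induced A)),
    run ver (fun y : vtx (induced A) => L (val y)) k x = run ver L k (val x).
Proof.
move=> A_closed; elim=> [|k IH] x //=.
rewrite (eq_map IH) IH; apply: vstep_perm.
rewrite (map_comp (run ver L k) val); apply: perm_map.
apply: uniq_perm; first by rewrite (map_inj_uniq val_inj) enum_uniq.
  exact: enum_uniq.
move=> y; rewrite mem_enum; apply/mapP/idP => [[z] | xy].
  by rewrite mem_enum => xz ->.
have yA : y \in A by apply: A_closed xy; apply: valP.
by exists (exist _ y yA); rewrite ?mem_enum.
Qed.

Lemma accepts_component (G : config S) t (L : vtx G -> bitseq) (x0 : vtx G) :
  accepts ver t L -> accepts ver t (fun x : vtx (component x0) => L (val x)).
Proof.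
move=> accL x; rewrite /accepts run_induced //.
by move=> y z; rewrite !inE => x0y yz; apply: connect_trans x0y (connect1 yz).
Qed.

Lemma state_iso_adj_perm (G : config S) (A B : {set vtx G}) f x :
  state_iso A B f -> x \in A -> {subset adj x <= A} -> {subset adj (f x) <= B} ->
  perm_eq (enum (adj (f x))) [seq f y | y <- enum (adj x)].
Proof.
move=> [_ f_inj f_onto f_adj _] xA adjA adjB.
apply: uniq_perm; first exact: enum_uniq.
  rewrite map_inj_in_uniq ?enum_uniq // => y z.
  by rewrite !mem_enum => /adjA yA /adjA zA; apply: f_inj.
move=> y; rewrite mem_enum; apply/idP/mapP => [fxy | [z]].
  have [z zA fz] := f_onto y (adjB _ fxy).
  exists z; rewrite // mem_enum.
  have : adj (f x) (f z) by rewrite fz.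
  by rewrite f_adj.
rewrite mem_enum => xz ->.
have : adj x z := xz.
by rewrite -f_adj //; apply: adjA.
Qed.

Lemma run_state_iso (G : config S) (A B : {set vtx G}) f (L L' : vtx G -> bitseq) :
  state_iso A B f -> forall k x,
  {subset within (@adj S G) k x <= A} -> {subset within (@adj S G) k (f x) <= B} ->
  {in within (@adj S G) k x, forall y, L (f y) = L' y} ->
  run ver L k (f x) = run ver L' k x.
Proof.
move=> fiso; have [_ _ _ f_adj f_st] := fiso.
elim=> [|k IH] x ballA ballB lab.
  by rewrite /= f_st ?lab ?ballA //; apply: within_refl.
have xA : x \in A by apply: ballA; apply: within_refl.
have adjA := within_sub_adj ballA.
rewrite /= IH; first last.
- by move=> y /withinS; apply: lab.
- exact: within_subS ballB.
- exact: within_subS ballA.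
apply: vstep_perm.
apply: (perm_trans (perm_map _ (state_iso_adj_perm fiso xA adjA (within_sub_adj ballB)))).
rewrite -map_comp; suff -> : [seq (run ver L k \o f) z | z <- enum (adj x)] =
                             [seq run ver L' k z | z <- enum (adj x)] by [].
apply/eq_in_map => z; rewrite mem_enum => xz /=.
apply: IH; first exact: within_sub_cons xz ballA.
  by apply: within_sub_cons ballB; rewrite f_adj //; apply: adjA.
by move=> y /(within_cons xz); apply: lab.
Qed.

Lemma run_state_iso_copies (G : config S) (A B C : {set vtx G}) f g
    (L : vtx G -> bitseq) k x :
  state_iso A B f -> state_iso A C g -> {in A, forall y, L (f y) = L (g y)} ->
  {subset within (@adj S G) k x <= A} ->
  {subset within (@adj S G) k (f x) <= B} -> {subset within (@adj S G) k (g x) <= C} ->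
  run ver L k (f x) = run ver L k (g x).
Proof.
move=> fiso giso Lfg ballA ballB ballC.
rewrite (run_state_iso (L' := L \o f) fiso) // (run_state_iso (L' := L \o f) giso) //.
by move=> y /ballA yA; rewrite /= Lfg.
Qed.

Lemma run_cross (G : config S) t ti hi tj hj (L : vtx G -> bitseq) :
  simple_graph G -> adj ti hi -> adj tj hj ->
  [disjoint nbhd t (ti, hi) & nbhd t (tj, hj)] ->
  (forall m, m < t -> run ver L m hi = run ver L m hj) ->
  (forall m, m < t -> run ver L m ti = run ver L m tj) ->
  forall x, run ver (G := cross (ti, hi) (tj, hj)) L t x = run ver L t x.
Proof.
move=> [asym airr] ai aj; case: t => [|t] disj hrun trun; first by [].
have [sep ntihj ntjhi] := disjoint_nbhd_separated asym airr ai aj disj.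
apply: (@run_rewire G (cross_adj (@adj S G) (ti, hi) (tj, hj))) => m x mt.
by apply: cross_adj_perm => //; [apply: hrun | apply: trun].
Qed.

Lemma run_cross_iso_copies (G : config S) t (e1 ei ej : vtx G * vtx G) si sj
    (L : vtx G -> bitseq) :
  simple_graph G -> adj (Tl ei) (Hd ei) -> adj (Tl ej) (Hd ej) ->
  [disjoint nbhd t ei & nbhd t ej] ->
  state_iso (nbhd t e1) (nbhd t ei) si -> si (Hd e1) = Hd ei -> si (Tl e1) = Tl ei ->
  state_iso (nbhd t e1) (nbhd t ej) sj -> sj (Hd e1) = Hd ej -> sj (Tl e1) = Tl ej ->
  {in nbhd t e1, forall x, L (si x) = L (sj x)} ->
  forall x, run ver (G := cross ei ej) L t x = run ver L t x.
Proof.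
case: ei => ti hi; case: ej => tj hj; rewrite /Tl /Hd /=.
move=> Gsimple ai aj disj isoi si_hd si_tl isoj sj_hd sj_tl Lij; have [asym _] := Gsimple.
apply: run_cross => // m /ltnW mt.
- rewrite -si_hd -sj_hd; apply: (run_state_iso_copies isoi isoj Lij).
  + exact: within_Hd_nbhd.
  + by rewrite si_hd; apply: (within_Hd_nbhd asym (e := (ti, hi))).
  + by rewrite sj_hd; apply: (within_Hd_nbhd asym (e := (tj, hj))).
- rewrite -si_tl -sj_tl; apply: (run_state_iso_copies isoi isoj Lij).
  + exact: within_Tl_nbhd.
  + by rewrite si_tl; apply: (within_Tl_nbhd asym (e := (ti, hi))).
  + by rewrite sj_tl; apply: (within_Tl_nbhd asym (e := (tj, hj))).
Qed.

End Runs.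

Theorem theorem2 :
  exists c : nat, 0 < c /\
  forall (S : Type) (F : config S -> Prop) (P : config S -> bool) (t : nat)
    (Gs : config S) (r q : nat) (e : nat -> vtx Gs * vtx Gs)
    (sigma : nat -> vtx Gs -> vtx Gs),
    F Gs -> P Gs = true ->
    simple_graph Gs ->
    (forall i, 1 <= i <= r -> adj (Tl (e i)) (Hd (e i))) ->
    (forall i j, 1 <= i <= r -> 1 <= j <= r -> i != j ->
       [disjoint nbhd t (e i) & nbhd t (e j)]) ->
    (forall i, 1 <= i <= r -> #|nbhd t (e i)| = q) ->
    (forall i, 1 <= i <= r ->
       [/\ state_iso (nbhd t (e 1)) (nbhd t (e i)) (sigma i),
           sigma i (Hd (e 1)) = Hd (e i) &
           sigma i (Tl (e 1)) = Tl (e i)]) ->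
    (forall i j, 1 <= i <= r -> 1 <= j <= r -> i != j ->
       exists x : vtx (cross (e i) (e j)),
         F (component x) /\ P (component x) = false) ->
    forall (prv : prover S) (ver : verifier S),
      is_PLS F P t prv ver ->
      forall l : nat, label_size_le F P prv l ->
      r <= 2 ^ (c * q * l).
Proof.
exists 2; split => // S F P t Gs r q e sigma FGs PGs Gsimple edges disj card_nbhd isos crossed
  prv ver [complete sound] l label_size.
have [-> // | r_gt0] := posnP r.
pose L := prv Gs.
have copies_differ i j : 1 <= i <= r -> 1 <= j <= r ->
    {in nbhd t (e 1), forall x, L (sigma i x) = L (sigma j x)} -> i = j.
  move=> ir jr Lij; have [// | neq_ij] := eqVneq i j; exfalso.
  have [x [Fx Px]] := crossed i j ir jr neq_ij.
  apply: (sound _ Fx Px (fun y => L (val y))); apply: accepts_component => y.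
  have [isoi si_hd si_tl] := isos i ir; have [isoj sj_hd sj_tl] := isos j jr.
  rewrite (run_cross_iso_copies ver Gsimple (edges i ir) (edges j jr) (disj i j ir jr neq_ij)
             isoi si_hd si_tl isoj sj_hd sj_tl Lij).
  exact: complete.
have := @card_distinct_labelings _ (nbhd t (e 1)) r l (fun i x => L (sigma i.+1 x)).
rewrite (card_nbhd 1) // mulnAC; apply=> [i x | i j Lij]; first exact: label_size.
by apply/val_inj/succn_inj/copies_differ; rewrite /= ?ltn_ord.
Qed.
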